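(* Let $S$ be a semigroup with a zero element, defined by the finite complete semigroup presentation $\langle X\mid R\rangle$. Let $0$ be a symbol not in $X$ and let $z\in X^+$ be the $R$-irreducible word representing the zero of $S$. Then the rewriting system on $X\cup\{0\}$ $$R_0=R\cup\{(z,0)\}\cup\{(0x,0),(x0,0): x\in X\cup\{0\}\}$$ is finite and complete and defines $S$. Moreover, in this rewriting system the word $0$ is the irreducible word representing the zero of $S$.
   Context: A rewriting system $\langle X\mid R\rangle$ is a set $R$ of pairs $(u,v)$ (rules $u\to v$) of words $u,v\in X^+$; it is finite if $X$ and $R$ are finite. One-step reduction: $w_1uw_2\to_R w_1vw_2$ for $(u,v)\in R$, $w_1,w_2\in X^*$; $\to_R^*$ is its reflexive transitive closure. A word is $R$-irreducible if no rule applies to it. $R$ is noetherian if there is no infinite chain $w_1\to_R w_2\to_R\cdots$, confluent if $u\to_R^*v$ and $u\to_R^*v'$ imply a $w$ with $v\to_R^*w$, $v'\to_R^*w$, and complete if both; in a complete system each congruence class contains exactly one irreducible word. The semigroup defined by $\langle X\mid R\rangle$ is $X^+$ modulo the congruence generated by $R$. *)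

From mathcomp Require Import all_boot.
From Stdlib Require Import Relation_Operators.

Set Implicit Arguments.
Unset Strict Implicit.
Unset Printing Implicit Defensive.

Section Rewriting.
Variable X : eqType.

Definition rules_nonempty (R : seq (seq X * seq X)) : Prop :=
  forall u v, (u, v) \in R -> u != [::] /\ v != [::].

Definition step (R : seq (seq X * seq X)) (w w' : seq X) : Prop :=
  exists w1 w2 u v, (u, v) \in R /\ w = w1 ++ u ++ w2 /\ w' = w1 ++ v ++ w2.

Definition reduces (R : seq (seq X * seq X)) : seq X -> seq X -> Prop :=
  clos_refl_trans _ (step R).

Definition irreducible (R : seq (seq X * seq X)) (w : seq X) : Prop :=
  forall w', ~ step R w w'.

Definition noetherian (R : seq (seq X * seq X)) : Prop :=
  ~ exists f : nat -> seq X, forall n, step R (f n) (f n.+1).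

Definition confluent (R : seq (seq X * seq X)) : Prop :=
  forall u v v', reduces R u v -> reduces R u v' ->
    exists w, reduces R v w /\ reduces R v' w.

Definition complete (R : seq (seq X * seq X)) : Prop :=
  noetherian R /\ confluent R.

(* The congruence on words generated by R (one-step reduction is already
   compatible with concatenation, so its equivalence closure is the
   congruence generated by R).  The semigroup defined by <X | R> is
   X^+ modulo this congruence. *)
Definition congr (R : seq (seq X * seq X)) : seq X -> seq X -> Prop :=
  clos_refl_sym_trans _ (step R).

Definition represents_zero (R : seq (seq X * seq X)) (z : seq X) : Prop :=
  z != [::] /\
  forall w, w != [::] -> congr R (w ++ z) z /\ congr R (z ++ w) z.

End Rewriting.

(* The alphabet X ∪ {0}: [Some x] is the letter x, [None] is the new symbol 0. *)
Definition lift_rule (X : Type) (r : seq X * seq X) : seq (option X) * seq (option X) :=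
  (map Some r.1, map Some r.2).

Definition R0 (X : finType) (R : seq (seq X * seq X)) (z : seq X)
  : seq (seq (option X) * seq (option X)) :=
  map (@lift_rule X) R
  ++ [:: (map Some z, [:: None])]
  ++ flatten [seq [:: ([:: None; x], [:: None]); ([:: x; None], [:: None])]
             | x <- enum {: option X}].

(* <X∪{0} | R0> defines the same semigroup S as <X | R>, via the natural
   map induced by X ⊆ X∪{0}: this map X^+/R -> (X∪{0})^+/R0 is a
   well-defined injective (1) and surjective (2) semigroup homomorphism. *)
Definition defines_same_semigroup (X : finType) (R : seq (seq X * seq X))
  (R' : seq (seq (option X) * seq (option X))) : Prop :=
  (forall u v : seq X, u != [::] -> v != [::] ->
      (congr R u v <-> congr R' (map Some u) (map Some v))) /\
  (forall w : seq (option X), w != [::] ->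
      exists u : seq X, u != [::] /\ congr R' w (map Some u)).

(* Cutting a word over X ∪ {0} at its zeros gives a list of words over X.
   Every rule of R0 replaces one of these segments by finitely many segments,
   each an R-reduct or a proper factor of it; as R is noetherian this order on
   X-words is well founded, hence so is its multiset extension, and R0
   terminates.  Reading 0 as z maps R0-congruence into R-congruence, so words
   denoting the zero of S (those containing 0 and the lifts of words congruent
   to z) all reduce to 0, while any other word only admits lifted R-reductions;
   confluence of R0 is then inherited from R. *)

From mathcomp Require Import all_boot zify.
From Stdlib Require Import Relation_Operators Operators_Properties Classical ClassicalEpsilon.

Set Implicit Arguments.
Unset Strict Implicit.
Unset Printing Implicit Defensive.

Arguments rt_step {A R x y}.
Arguments rt_refl {A R x}.
Arguments rt_trans {A R x y z}.
Arguments rst_step {A R x y}.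
Arguments rst_refl {A R x}.
Arguments rst_sym {A R x y}.
Arguments rst_trans {A R x y z}.

Section Rewriting.
Variable X : eqType.
Variable R : seq (seq X * seq X).

Lemma step_cat p s u v : step R u v -> step R (p ++ u ++ s) (p ++ v ++ s).
Proof.
case=> w1 [w2 [l [r [lr_R [-> ->]]]]].
by exists (p ++ w1), (w2 ++ s), l, r; rewrite !catA.
Qed.

Lemma reduces_cat p s u v : reduces R u v -> reduces R (p ++ u ++ s) (p ++ v ++ s).
Proof.
elim=> [{}u {}v /(step_cat p s) /rt_step //|{}u|u1 u2 u3 _ red12 _ red23].
- exact: rt_refl.
- exact: rt_trans red12 red23.
Qed.

Lemma congr_cat p s u v : congr R u v -> congr R (p ++ u ++ s) (p ++ v ++ s).
Proof.
elim=> [{}u {}v /(step_cat p s) /rst_step //|{}u|{}u {}v _ /rst_sym //|].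
- exact: rst_refl.
- by move=> u1 u2 u3 _ c12 _ c23; exact: rst_trans c12 c23.
Qed.

Lemma reduces_congr u v : reduces R u v -> congr R u v.
Proof.
elim=> [{}u {}v /rst_step //|{}u|u1 u2 u3 _ c12 _ c23].
- exact: rst_refl.
- exact: rst_trans c12 c23.
Qed.

Lemma church_rosser u v : confluent R -> congr R u v ->
  exists w, reduces R u w /\ reduces R v w.
Proof.
move=> conf; elim=> [{}u {}v st|{}u|{}u {}v _ [w [uw vw]]|].
- by exists v; split; [exact: rt_step | exact: rt_refl].
- by exists u; split; exact: rt_refl.
- by exists w.
- move=> u1 u2 u3 _ [w [u1w u2w]] _ [w' [u2w' u3w']].
  have [t [wt w't]] := conf _ _ _ u2w u2w'.
  by exists t; split; [exact: rt_trans u1w wt | exact: rt_trans u3w' w't].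
Qed.

Lemma irreducible_reduces u v : irreducible R u -> reduces R u v -> v = u.
Proof.
by move=> irr /clos_rt_rt1n_iff [//|y {}v st _]; case: (irr _ st).
Qed.

Lemma congr_irreducible_reduces u v : confluent R -> irreducible R v ->
  congr R u v -> reduces R u v.
Proof.
move=> conf irr /(church_rosser conf) [w [uw vw]].
by rewrite -(irreducible_reduces irr vw).
Qed.

End Rewriting.

Section Accessibility.
Variables (T : Type) (lt : T -> T -> Prop).

Lemma no_chain_Acc : ~ (exists f : nat -> T, forall n, lt (f n.+1) (f n)) ->
  forall x, Acc lt x.
Proof.
move=> no_chain x; apply: NNPP => x_nacc; apply: no_chain.
have next y : ~ Acc lt y -> {y' | lt y' y /\ ~ Acc lt y'}.
  move=> y_nacc; apply: constructive_indefinite_description; apply: NNPP => none.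
  by apply: y_nacc; constructor => y' lt_y'y; apply: NNPP => y'_nacc; apply: none; exists y'.
pose nextS (s : {y | ~ Acc lt y}) : {y | ~ Acc lt y} :=
  exist _ (sval (next _ (proj2_sig s))) (proj2 (proj2_sig (next _ (proj2_sig s)))).
exists (fun n => sval (iter n nextS (exist _ x x_nacc))) => n /=.
exact: (proj1 (proj2_sig (next _ _))).
Qed.

Lemma Acc_no_chain (f : nat -> T) : Acc lt (f 0) -> ~ (forall n, lt (f n.+1) (f n)).
Proof.
move Ef0: (f 0) => x acc_x; elim: acc_x f Ef0 => {}x _ IH f Ef0 chain.
by apply: (IH (f 1) _ (fun n => f n.+1)); rewrite // -Ef0; exact: chain.
Qed.

End Accessibility.

Section MultisetOrder.
Variables (T : eqType) (lt : T -> T -> Prop).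

(* Lists stand for multisets: [mult_lt] is one step of the multiset
   extension of [lt]. *)
Definition mult_lt (l' l : seq T) := exists p x q K,
  l = p ++ x :: q /\ l' = p ++ K ++ q /\ {in K, forall y, lt y x}.

Lemma mult_lt_replace p x q (K : seq T) : {in K, forall y, lt y x} ->
  mult_lt (p ++ K ++ q) (p ++ x :: q).
Proof. by exists p, x, q, K. Qed.

Lemma mult_lt_cat p q l' l : mult_lt l' l -> mult_lt (p ++ l' ++ q) (p ++ l ++ q).
Proof.
case=> p1 [x [q1 [K [-> [-> ltK]]]]].
by exists (p ++ p1), x, (q1 ++ q), K; rewrite -!catA.
Qed.

Lemma Acc_mult_lt_cons x l : Acc lt x -> Acc mult_lt l -> Acc mult_lt (x :: l).
Proof.
move=> acc_x; elim: acc_x l => {}x _ IHx l acc_l; elim: acc_l => {}l acc_l IHl.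
constructor=> _ [[|x' p] [y [q [K [/= [Ex El] [-> ltK]]]]]]; subst.
- elim: K ltK => [|k K IHK] ltK; first exact: Acc_intro acc_l.
  apply: IHx; first by apply: ltK; rewrite mem_head.
  by apply: IHK => k' k'K; apply: ltK; rewrite inE k'K orbT.
- by apply: IHl; exists p, y, q, K.
Qed.

Lemma Acc_mult_lt l : (forall x, Acc lt x) -> Acc mult_lt l.
Proof.
move=> acc_lt; elim: l => [|x l IH]; last exact: Acc_mult_lt_cons.
by constructor=> l' [[|? ?] [? [? [? []]]]].
Qed.

End MultisetOrder.

Section WordOrder.
Variable X : eqType.
Variable R : seq (seq X * seq X).

Definition descend (y x : seq X) := step R x y \/ infix y x && (size y < size x).

Lemma descend_infix l y r x : x = l ++ y ++ r -> 0 < size l + size r -> descend y x.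
Proof. by move=> -> lr; right; rewrite infix_infix /= !size_cat; lia. Qed.

Lemma Acc_descend W : Acc (fun y x => step R x y) W ->
  forall u, infix u W -> Acc descend u.
Proof.
elim=> {}W _ IH u; have [n] := ubnP (size u).
elim: n u => [u|n IHn u]; first by rewrite ltn0.
move=> /ltnSE le_un uW; constructor=> y [st | /andP [yu lt_yu]].
- have [l [r EW]] := infixP uW.
  by apply: (IH (l ++ y ++ r)); [rewrite EW; exact: step_cat | exact: infix_infix].
- exact: IHn (leq_trans lt_yu le_un) (infix_trans yu uW).
Qed.

Lemma Acc_descend_noetherian u : noetherian R -> Acc descend u.
Proof.
by move=> /(no_chain_Acc (lt := fun y x => step R x y)) acc; exact: Acc_descend (infix_refl u).
Qed.

End WordOrder.

(* A word over [X ∪ {0}] is cut at its zeros into a list of words over X;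
   [seg] has one more entry than there are zeros. *)
Fixpoint seg (X : Type) (w : seq (option X)) : seq (seq X) :=
  match w with
  | [::] => [:: [::]]
  | None :: w => [::] :: seg w
  | Some x :: w => (x :: head [::] (seg w)) :: behead (seg w)
  end.

Section Segments.
Variable X : eqType.
Implicit Types (u : seq X) (w : seq (option X)).

Lemma seg_neq0 w : seg w != [::].
Proof. by case: w => [|[x|] w]. Qed.

Lemma seg_map_Some u : seg (map Some u) = [:: u].
Proof. by elim: u => //= x u ->. Qed.

Lemma seg_cat_None w1 w2 : seg (w1 ++ None :: w2) = seg w1 ++ seg w2.
Proof.
elim: w1 => [|[x|] w1 IH] //=; last by rewrite IH.
by rewrite IH; case: (seg w1) (seg_neq0 w1).
Qed.

Lemma seg_prefix_frame w1 : exists p a,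
  forall w, seg (w1 ++ w) = p ++ seg (map Some a ++ w).
Proof.
elim: w1 => [|[x|] w1 [p [a IH]]]; first by exists [::], [::].
- case: p IH => [|s p] IH.
    by exists [::], (x :: a) => w /=; rewrite IH.
  by exists ((x :: s) :: p), a => w /=; rewrite IH.
- by exists ([::] :: p), a => w /=; rewrite IH.
Qed.

Lemma seg_suffix_frame w2 : exists b q,
  forall w, seg (w ++ w2) = seg (w ++ map Some b) ++ q.
Proof.
elim: w2 => [|[x|] w2 [b [q IH]]].
- by exists [::], [::] => w; rewrite !cats0.
- by exists (x :: b), q => w; rewrite -cat1s catA IH -catA.
- by exists [::], (seg w2) => w; rewrite seg_cat_None cats0.
Qed.

Lemma seg_frame w1 w2 : exists p a b q, forall w,
  seg (w1 ++ w ++ w2) = p ++ seg (map Some a ++ w ++ map Some b) ++ q.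
Proof.
have [p [a segl]] := seg_prefix_frame w1; have [b [q segr]] := seg_suffix_frame w2.
by exists p, a, b, q => w; rewrite segl catA segr -catA catA.
Qed.

End Segments.

Lemma map_Some_pmap (X : eqType) (w : seq (option X)) :
  None \notin w -> map Some (pmap id w) = w.
Proof. by elim: w => [|[x|] w IH] //=; rewrite inE negb_or => /andP [_ /IH ->]. Qed.

Lemma None_notin_map (X : eqType) (u : seq X) : (None \in map Some u) = false.
Proof. by apply/negbTE/mapP => -[]. Qed.

Section ZeroRewriting.
Variable X : finType.
Variable R : seq (seq X * seq X).
Variable z : seq X.

Lemma R0P l r : (l, r) \in R0 R z ->
  [\/ exists u v, (u, v) \in R /\ l = map Some u /\ r = map Some v,
      l = map Some z /\ r = [:: None],
      exists x, l = [:: None; x] /\ r = [:: None]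
    | exists x, l = [:: x; None] /\ r = [:: None]].
Proof.
rewrite /R0 !mem_cat => /or3P [/mapP [[u v] uv [-> ->]] | | /flatten_mapP [x _]].
- by apply: Or41; exists u, v.
- by rewrite inE => /eqP [-> ->]; exact: Or42.
- by rewrite !inE => /orP [] /eqP [-> ->]; [apply: Or43 | apply: Or44]; exists x.
Qed.

Lemma mem_R0_lift u v : (u, v) \in R -> (map Some u, map Some v) \in R0 R z.
Proof. by move=> uv; rewrite mem_cat (map_f (@lift_rule X) uv). Qed.

Lemma mem_R0_zero : (map Some z, [:: None]) \in R0 R z.
Proof. by rewrite !mem_cat mem_head orbT. Qed.

Lemma mem_R0_0x x : ([:: None; x], [:: None]) \in R0 R z.
Proof.
by rewrite !mem_cat; apply/or3P/Or33/flatten_mapP; exists x; rewrite ?mem_enum ?mem_head.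
Qed.

Lemma mem_R0_x0 x : ([:: x; None], [:: None]) \in R0 R z.
Proof.
rewrite !mem_cat; apply/or3P/Or33/flatten_mapP.
by exists x; rewrite ?mem_enum // !inE eqxx orbT.
Qed.

Lemma rules_nonempty_R0 : rules_nonempty R -> z != [::] -> rules_nonempty (R0 R z).
Proof.
move=> neR nez l r /R0P [[u [v [/neR [neu nev] [-> ->]]]] | [-> ->] | [x [-> ->]] | [x [-> ->]]] //.
- by rewrite -!size_eq0 !size_map !size_eq0.
- by rewrite -size_eq0 size_map size_eq0.
Qed.

Lemma step_R0_lift p q : step R p q -> step (R0 R z) (map Some p) (map Some q).
Proof.
case=> w1 [w2 [u [v [uv [-> ->]]]]].
exists (map Some w1), (map Some w2), (map Some u), (map Some v).
by rewrite !map_cat; split=> //; exact: mem_R0_lift.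
Qed.

Lemma reduces_R0_lift p q : reduces R p q -> reduces (R0 R z) (map Some p) (map Some q).
Proof.
elim=> [{}p {}q /step_R0_lift /rt_step //|{}p|p1 p2 p3 _ r12 _ r23].
- exact: rt_refl.
- exact: rt_trans r12 r23.
Qed.

Lemma congr_R0_lift p q : congr R p q -> congr (R0 R z) (map Some p) (map Some q).
Proof.
elim=> [{}p {}q /step_R0_lift /rst_step //|{}p|{}p {}q _ /rst_sym //|].
- exact: rst_refl.
- by move=> p1 p2 p3 _ c12 _ c23; exact: rst_trans c12 c23.
Qed.

Lemma step_R0_zero : step (R0 R z) (map Some z) [:: None].
Proof. by exists [::], [::], (map Some z), [:: None]; rewrite !cats0; split=> //; exact: mem_R0_zero. Qed.

Lemma reduces_R0_None w : None \in w -> reduces (R0 R z) w [:: None].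
Proof.
have absorb_r b : reduces (R0 R z) (None :: b) [:: None].
  elim: b => [|x b IH]; first exact: rt_refl.
  apply: rt_trans IH; apply: rt_step.
  by exists [::], b, [:: None; x], [:: None]; split=> //; exact: mem_R0_0x.
have absorb_l a : reduces (R0 R z) (a ++ [:: None]) [:: None].
  elim: a => [|x a IH]; first exact: rt_refl.
  apply: (rt_trans (y := [:: x; None])); first by have := reduces_cat [:: x] [::] IH; rewrite !cats0.
  by apply: rt_step; exists [::], [::], [:: x; None], [:: None]; split=> //; exact: mem_R0_x0.
case/splitPr=> a b; apply: rt_trans (absorb_l a).
by have := reduces_cat a [::] (absorb_r b); rewrite !cats0.
Qed.

Definition unlift (w : seq (option X)) : seq X := if None \in w then z else pmap id w.

Lemma unlift_map u : unlift (map Some u) = u.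
Proof. by rewrite /unlift None_notin_map; exact: map_pK. Qed.

Lemma unlift_None w : None \in w -> unlift w = z.
Proof. by rewrite /unlift => ->. Qed.

Lemma unlift_notin_None w : None \notin w -> unlift w = pmap id w.
Proof. by rewrite /unlift => /negbTE ->. Qed.

Section Zero.
Hypothesis zero : represents_zero R z.

Lemma congr_zero_infix a b : congr R (a ++ z ++ b) z.
Proof.
have zero_r b' : congr R (z ++ b') z.
  by case: b' => [|y b']; [rewrite cats0; exact: rst_refl | exact: (proj2 (proj2 zero _ _))].
have zero_l a' : congr R (a' ++ z) z.
  by case: a' => [|y a']; [exact: rst_refl | exact: (proj1 (proj2 zero _ _))].
have := congr_cat a [::] (zero_r b); rewrite !cats0 => azb_az.
exact: rst_trans azb_az (zero_l a).
Qed.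

Lemma congr_unlift_step w w' : step (R0 R z) w w' -> congr R (unlift w) (unlift w').
Proof.
case=> w1 [w2 [l [r [lr [-> ->]]]]].
have [N12|] := boolP (None \in w1 ++ w2).
  have N l' : None \in w1 ++ l' ++ w2 by move: N12; rewrite !mem_cat => /orP [] ->; rewrite ?orbT.
  by rewrite !unlift_None //; exact: rst_refl.
rewrite mem_cat negb_or => /andP [N1 N2].
have unliftE l' : None \notin l' -> unlift (w1 ++ l' ++ w2) = pmap id w1 ++ pmap id l' ++ pmap id w2.
  by move=> Nl; rewrite unlift_notin_None ?pmap_cat // !mem_cat negb_or N1 negb_or Nl.
case/R0P: lr => [[u [v [uv [-> ->]]]] | [-> ->] | [x [-> ->]] | [x [-> ->]]].
- rewrite !unliftE ?None_notin_map // !map_pK //; apply: rst_step.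
  by exists (pmap id w1), (pmap id w2), u, v.
- rewrite unliftE ?None_notin_map // map_pK // unlift_None; last by rewrite !mem_cat mem_head orbT.
  exact: congr_zero_infix.
- by rewrite !unlift_None ?mem_cat ?mem_head ?orbT //; exact: rst_refl.
- by rewrite !unlift_None ?mem_cat ?inE ?eqxx ?orbT //; exact: rst_refl.
Qed.

Lemma congr_unlift w w' : congr (R0 R z) w w' -> congr R (unlift w) (unlift w').
Proof.
elim=> [{}w {}w' /congr_unlift_step //|{}w|{}w {}w' _ /rst_sym //|].
- exact: rst_refl.
- by move=> w1 w2 w3 _ c12 _ c23; exact: rst_trans c12 c23.
Qed.

Lemma step_R0_pmap w w' : step (R0 R z) w w' -> None \notin w' ->
  step R (pmap id w) (pmap id w').
Proof.
case=> w1 [w2 [l [r [lr [-> ->]]]]]; rewrite !mem_cat !negb_or => /and3P [_ Nr _].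
case/R0P: lr Nr => [[u [v [uv [-> ->]]]] _ | [_ ->] | [x [_ ->]] | [x [_ ->]]];
  rewrite ?mem_head //.
by exists (pmap id w1), (pmap id w2), u, v; rewrite !pmap_cat !map_pK.
Qed.

Lemma nonzero_notin_None w : ~ congr R (unlift w) z -> None \notin w.
Proof. by apply: contra_notN => /unlift_None ->; exact: rst_refl. Qed.

Lemma reduces_R0_nonzero w w' : ~ congr R (unlift w) z ->
  reduces (R0 R z) w w' -> reduces R (unlift w) (unlift w').
Proof.
move=> + /clos_rt_rt1n_iff red; elim: red => [{}w _|w1 w2 w3 st _ IH nz1].
  exact: rt_refl.
have c12 := congr_unlift_step st.
have nz2 : ~ congr R (unlift w2) z by move=> c2; apply: nz1; exact: rst_trans c12 c2.
apply: rt_trans (IH nz2); apply: rt_step.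
rewrite !unlift_notin_None; try exact: nonzero_notin_None.
exact: step_R0_pmap st (nonzero_notin_None nz2).
Qed.

Lemma zero_reduces_None w : confluent R -> irreducible R z ->
  congr R (unlift w) z -> reduces (R0 R z) w [:: None].
Proof.
move=> conf irr; have [/reduces_R0_None //|Nw] := boolP (None \in w).
rewrite -(map_Some_pmap Nw) unlift_map => /(congr_irreducible_reduces conf irr).
move=> /reduces_R0_lift red; exact: rt_trans red (rt_step step_R0_zero).
Qed.

Lemma confluent_R0 : confluent R -> irreducible R z -> confluent (R0 R z).
Proof.
move=> conf irr u v v' uv uv'.
have [zu|nzu] := classic (congr R (unlift u) z).
  have to_None t : reduces (R0 R z) u t -> reduces (R0 R z) t [:: None].
    move=> /reduces_congr /congr_unlift ut; apply: zero_reduces_None conf irr _.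
    exact: rst_trans (rst_sym ut) zu.
  by exists [:: None]; split; apply: to_None.
have [t [vt v't]] := conf _ _ _ (reduces_R0_nonzero nzu uv) (reduces_R0_nonzero nzu uv').
have lift_free v1 : reduces (R0 R z) u v1 -> map Some (unlift v1) = v1.
  move=> /reduces_congr /congr_unlift uv1.
  have Nv1 : None \notin v1 by apply: nonzero_notin_None => v1z; apply: nzu; exact: rst_trans uv1 v1z.
  by rewrite unlift_notin_None // map_Some_pmap.
exists (map Some t); rewrite -(lift_free _ uv) -(lift_free _ uv').
by split; exact: reduces_R0_lift.
Qed.

Lemma R0_defines_same_semigroup : defines_same_semigroup R (R0 R z).
Proof.
split=> [u v _ _ | w new].
  split; first exact: congr_R0_lift.
  by move=> /congr_unlift; rewrite !unlift_map.
have [Nw|Nw] := boolP (None \in w).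
  exists z; split; first exact: proj1 zero.
  exact: rst_trans (reduces_congr (reduces_R0_None Nw)) (rst_sym (rst_step step_R0_zero)).
exists (pmap id w); rewrite map_Some_pmap //; split; last exact: rst_refl.
by apply: contraNneq new => pmap_nil; rewrite -(map_Some_pmap Nw) pmap_nil.
Qed.

End Zero.

Lemma step_R0_seg w w' : z != [::] -> step (R0 R z) w w' ->
  mult_lt (descend R) (seg w') (seg w).
Proof.
move=> nez [w1 [w2 [l [r [lr [-> ->]]]]]].
have [p [a [b [q frame]]]] := seg_frame w1 w2; rewrite !frame; apply: mult_lt_cat.
case/R0P: lr => [[u [v [uv [-> ->]]]] | [-> ->] | [[c|] [-> ->]] | [[c|] [-> ->]]].
- rewrite -!map_cat !seg_map_Some.
  apply: (mult_lt_replace [::] [::] (K := [:: a ++ v ++ b])) => _ /[!inE] /eqP ->.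
  by left; exists a, b, u, v.
- rewrite -!map_cat seg_map_Some /= seg_cat_None !seg_map_Some.
  have sz : 0 < size z by rewrite lt0n size_eq0.
  apply: (mult_lt_replace [::] [::] (K := [:: a; b])) => _ /[!inE] /orP [] /eqP ->.
  + by apply: (@descend_infix _ _ [::] _ (z ++ b)); rewrite //= size_cat; exact: ltn_addr sz.
  + apply: (@descend_infix _ _ (a ++ z) _ [::]); first by rewrite cats0 catA.
    by rewrite addn0 size_cat; exact: ltn_addl sz.
- rewrite /= -map_cons !seg_cat_None !seg_map_Some.
  apply: (mult_lt_replace [:: a] [::] (K := [:: b])) => _ /[!inE] /eqP ->.
  by apply: (@descend_infix _ _ [:: c] _ [::]); rewrite ?cats0.
- rewrite /= !seg_cat_None /= !seg_map_Some.
  by apply: (mult_lt_replace [:: a] [:: b] (K := [::])) => ?; rewrite in_nil.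
- have -> : map Some a ++ [:: Some c; None] ++ map Some b =
            map Some (rcons a c) ++ None :: map Some b by rewrite map_rcons -cats1 -catA.
  rewrite /= !seg_cat_None !seg_map_Some.
  apply: (mult_lt_replace [::] [:: b] (K := [:: a])) => _ /[!inE] /eqP ->.
  by apply: (@descend_infix _ _ [::] _ [:: c]); rewrite ?cats1.
- rewrite /= !seg_cat_None /= !seg_map_Some.
  by apply: (mult_lt_replace [:: a] [:: b] (K := [::])) => ?; rewrite in_nil.
Qed.

Lemma noetherian_R0 : noetherian R -> z != [::] -> noetherian (R0 R z).
Proof.
move=> noeth nez [f chain].
have acc := Acc_mult_lt (seg (f 0)) (fun u => Acc_descend_noetherian u noeth).
exact: (Acc_no_chain (f := fun n => seg (f n)) acc (fun n => step_R0_seg nez (chain n))).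
Qed.

Lemma irreducible_R0_None : rules_nonempty R -> z != [::] -> irreducible (R0 R z) [:: None].
Proof.
move=> neR nez w' [w1 [w2 [l [r [lr [E _]]]]]].
have [nel _] := rules_nonempty_R0 neR nez lr.
have : infix l [:: None] by rewrite E infix_infix.
rewrite infixs1 (negbTE nel) /= => /eqP.
have map_Some_neq u : map Some u <> [:: None] by case: u.
by case/R0P: lr => [[u [_ [_ [-> _]]]] | [-> _] | [x [-> _]] | [x [-> _]]] //; exact: map_Some_neq.
Qed.

Lemma represents_zero_R0 : represents_zero (R0 R z) [:: None].
Proof.
split=> // w _; split; apply/reduces_congr/reduces_R0_None.
all: by rewrite mem_cat mem_head ?orbT.
Qed.

End ZeroRewriting.

Theorem proposition2p1 (X : finType) (R : seq (seq X * seq X)) (z : seq X) :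
  rules_nonempty R ->
  complete R ->
  represents_zero R z ->
  irreducible R z ->
  [/\ rules_nonempty (R0 R z),
      complete (R0 R z),
      defines_same_semigroup R (R0 R z),
      represents_zero (R0 R z) [:: None]
    & irreducible (R0 R z) [:: None] /\ congr (R0 R z) (map Some z) [:: None]].
Proof.
move=> neR [noeth conf] zero irr; have nez := proj1 zero.
split.
- exact: rules_nonempty_R0.
- by split; [exact: noetherian_R0 | exact: confluent_R0].
- exact: R0_defines_same_semigroup.
- exact: represents_zero_R0.
- by split; [exact: irreducible_R0_None | apply: rst_step; exact: step_R0_zero].
Qed.
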